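(* Let $(a_i)$ be a real sequence and $t=(t_i)$ an increasing real sequence with the same index set. Then $t\in T_a$ if and only if $$\sum_{i=1}^n\big(a_{\lfloor p_i\rfloor_t}-a_{\lfloor q_i\rfloor_t}\big)\le\sum_{i=1}^n\left(\{q_i\}_t\frac{\Delta a_{\lfloor q_i\rfloor_t}}{\Delta t_{\lfloor q_i\rfloor_t}}-\{p_i\}_t\frac{\Delta a_{\lfloor p_i\rfloor_t}}{\Delta t_{\lfloor p_i\rfloor_t}}\right)$$ holds for all $n\ge2$ and all $(p_1,\dots,p_n),(q_1,\dots,q_n)\in I_t^n$ with $(p_1,\dots,p_n)\prec(q_1,\dots,q_n)$ (a term with $\{q\}_t=0$ is interpreted as $0$, even when $\lfloor q\rfloor_t$ is the last index).
   Context: For a real sequence $(x_i)$, $\Delta x_i=x_{i+1}-x_i$. ''Increasing'' means strictly increasing. $T_a$ is the set of increasing real sequences $t=(t_i)$ with the same index set as $a$ such that $(\Delta a_i/\Delta t_i)$ is non-decreasing. For increasing $t$: $I_t=[t_1,t_N]$ if $t=(t_1,\dots,t_N)$ is finite, and $I_t=[t_1,\lim_{i\to\infty}t_i)$ if $t$ is infinite. For $q\in I_t$, $\lfloor q\rfloor_t$ is the index $i$ of the largest $t_i$ with $t_i\le q$, and $\{q\}_t=q-t_{\lfloor q\rfloor_t}$. For $x,y\in\mathbb{R}^n$, with components in decreasing order $x_{[1]}\ge\dots\ge x_{[n]}$, $y_{[1]}\ge\dots\ge y_{[n]}$, $x\prec y$ means $\sum_{i=1}^k x_{[i]}\le\sum_{i=1}^k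 y_{[i]}$ for $k=1,\dots,n-1$ and $\sum_{i=1}^n x_i=\sum_{i=1}^n y_i$. *)

From HB Require Import structures.
From mathcomp Require Import all_boot all_order all_algebra.
From mathcomp Require Import boolp classical_sets reals.
Set Implicit Arguments. Unset Strict Implicit. Unset Printing Implicit Defensive.
Import Order.TTheory GRing.Theory Num.Theory.
Local Open Scope ring_scope.

(* Index set of a sequence: [Some N] = {0,...,N-1} (finite sequence of length N),
   [None] = all of nat (infinite sequence). *)
Definition idxset := option nat.

Definition in_dom (D : idxset) (i : nat) : Prop :=
  match D with Some N => (i < N)%N | None => True end.

Definition nonempty_dom (D : idxset) : Prop :=
  match D with Some N => (0 < N)%N | None => True end.

Section Defs.
Variable R : realType.

Definition increasing (D : idxset) (t : nat -> R) : Prop :=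
  forall i j, in_dom D i -> in_dom D j -> (i < j)%N -> t i < t j.

Definition slope (a t : nat -> R) (i : nat) : R :=
  (a i.+1 - a i) / (t i.+1 - t i).

(* T_a : increasing t (same index set D as a) with (Delta a_i / Delta t_i)
   non-decreasing; that sequence is indexed by the i with i, i+1 in D. *)
Definition in_Ta (D : idxset) (a t : nat -> R) : Prop :=
  increasing D t /\
  forall i j, (i <= j)%N -> in_dom D j.+1 -> slope a t i <= slope a t j.

(* I_t = [t_0, t_{N-1}] (finite) or [t_0, lim t_i) (infinite; for increasing t,
   q < lim t_i iff q < t_i for some i). *)
Definition in_It (D : idxset) (t : nat -> R) (q : R) : Prop :=
  match D with
  | Some N => t 0%N <= q /\ q <= t N.-1
  | None => t 0%N <= q /\ exists i, q < t i
  end.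

Definition floor_t (D : idxset) (t : nat -> R) (q : R) : nat :=
  xget 0%N (fun i => in_dom D i /\ t i <= q /\
                     forall j, in_dom D j -> t j <= q -> (j <= i)%N).

Definition frac_t (D : idxset) (t : nat -> R) (q : R) : R :=
  q - t (floor_t D t q).

Definition term (D : idxset) (a t : nat -> R) (q : R) : R :=
  if frac_t D t q == 0 then 0
  else frac_t D t q * slope a t (floor_t D t q).

Definition dsort n (x : 'I_n -> R) : seq R :=
  sort (fun u v : R => v <= u) [seq x i | i <- enum 'I_n].

Definition majorized n (x y : 'I_n -> R) : Prop :=
  (forall k, (1 <= k <= n.-1)%N ->
     \sum_(0 <= i < k) (dsort x)`_i <= \sum_(0 <= i < k) (dsort y)`_i) /\
  \sum_(i < n) x i = \sum_(i < n) y i.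

End Defs.

(* The inequality says exactly that sum_i f(p_i) <= sum_i f(q_i), where
   f x = a_{floor x} + {x} Delta a / Delta t is the piecewise-linear interpolant
   of the points (t_i, a_i); so the theorem is Karamata's inequality for f
   together with its converse.  Below t_M, f is an affine function plus
   sum_k (s_{k+1} - s_k) (x - t_{k+1})^+, where s is the slope sequence, and
   t \in T_a makes all these coefficients nonnegative.  A sum of hinge
   functions (x - c)^+ over a vector equals a prefix sum of its decreasing
   rearrangement minus a multiple of c, hence is monotone under majorization.
   Conversely, (c, c) is majorized by (c - h, c + h); taking c = t_{k+1} and h
   small, the inequality for these two vectors reads h (s_{k+1} - s_k) >= 0. *)

From HB Require Import structures.
From mathcomp Require Import all_boot all_order all_algebra.
From mathcomp Require Import boolp classical_sets reals.
From mathcomp Require Import ring lra.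
Set Implicit Arguments. Unset Strict Implicit. Unset Printing Implicit Defensive.
Import Order.TTheory GRing.Theory Num.Theory.
Local Open Scope ring_scope.

Section Floor.
Variable R : realType.
Variable D : idxset.
Variable t : nat -> R.
Hypothesis hD : nonempty_dom D.
Hypothesis ht : increasing D t.

Lemma in_dom_le i j : (i <= j)%N -> in_dom D j -> in_dom D i.
Proof. by case: D => //= N ij; apply: leq_ltn_trans. Qed.

Lemma in_dom0 : in_dom D 0.
Proof. by case: D hD. Qed.

Lemma in_dom_maxn i j : in_dom D i -> in_dom D j -> in_dom D (maxn i j).
Proof. by case/orP: (leq_total i j) => [/maxn_idPr|/maxn_idPl] ->. Qed.

Lemma increasing_le i j : in_dom D j -> (i <= j)%N -> t i <= t j.
Proof.
move=> dj; rewrite leq_eqVlt => /orP[/eqP->//|ij].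
by apply/ltW/ht => //; apply: in_dom_le dj; apply: ltnW.
Qed.

Lemma in_It_bound x : in_It D t x -> exists2 M, in_dom D M & x <= t M.
Proof.
case: D hD => [N|] /= N0 [_ hx]; first by exists N.-1; rewrite ?ltn_predL.
by case: hx => M /ltW; exists M.
Qed.

Lemma in_It_family_bound n (x : 'I_n -> R) : (forall i, in_It D t (x i)) ->
  exists2 M, in_dom D M & forall i, x i <= t M.
Proof.
move=> hx; have /choice[M hM] i : exists M, in_dom D M /\ x i <= t M.
  by have [M dM xM] := in_It_bound (hx i); exists M.
have dmax : in_dom D (\max_(i < n) M i).
  apply: big_ind; [exact: in_dom0 | exact: in_dom_maxn | by move=> i _; case: (hM i)].
exists (\max_(i < n) M i) => // i; have [_ xM] := hM i.
by apply: le_trans xM (increasing_le dmax (leq_bigmax i)).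
Qed.

Lemma in_It_lt x j : t 0%N <= x -> in_dom D j -> x < t j -> in_It D t x.
Proof.
move=> t0x dj xj; case ED: D dj => [N|] /= dj; last by split=> //; exists j.
split=> //; apply/ltW/(lt_le_trans xj)/increasing_le.
  by rewrite ED /= (ltn_predK dj).
by rewrite -ltnS (ltn_predK dj).
Qed.

Lemma floor_tP x : in_It D t x ->
  [/\ in_dom D (floor_t D t x), t (floor_t D t x) <= x &
      forall k, in_dom D k -> t k <= x -> (k <= floor_t D t x)%N].
Proof.
move=> hx; have [M dM xM] := in_It_bound hx.
pose P k := `[< in_dom D k /\ t k <= x >].
have exP : exists k, P k.
  by exists 0%N; apply/asboolP; split; [exact: in_dom0 | case: (D) hx => [?|] [] ].
have ubP k : P k -> (k <= M)%N.
  move=> /asboolP[dk tkx]; rewrite leqNgt; apply/negP => Mk.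
  by have := le_lt_trans xM (ht dM dk Mk); rewrite ltNge tkx.
case: (ex_maxnP exP ubP) => j /asboolP[dj tj] maxj.
have Pfl : exists j, in_dom D j /\ t j <= x /\
    forall k, in_dom D k -> t k <= x -> (k <= j)%N.
  by exists j; do 2 split=> //; move=> k dk tk; apply/maxj/asboolP.
by have [? [? ?]] := xgetPex 0%N Pfl.
Qed.

Lemma floor_t_eq x j : in_It D t x -> in_dom D j -> t j <= x ->
  (forall k, in_dom D k -> t k <= x -> (k <= j)%N) -> floor_t D t x = j.
Proof.
move=> hx dj tj maxj; have [dfl tfl maxfl] := floor_tP hx.
by apply/eqP; rewrite eqn_leq maxj ?maxfl.
Qed.

Lemma floor_t_between x j : in_It D t x -> in_dom D j.+1 ->
  t j <= x -> x < t j.+1 -> floor_t D t x = j.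
Proof.
move=> hx dj tj xj; apply: floor_t_eq => //; first exact: in_dom_le dj.
move=> k dk tk; rewrite leqNgt; apply/negP => jk.
by have := lt_le_trans xj (le_trans (increasing_le dk jk) tk); rewrite ltxx.
Qed.

End Floor.

Definition hinge (R : realType) (c x : R) : R := Num.max (x - c) 0.

Definition chord (R : realType) (a t : nat -> R) (j : nat) (x : R) : R :=
  a j + (x - t j) * slope a t j.

Definition interp (R : realType) (D : idxset) (a t : nat -> R) (x : R) : R :=
  a (floor_t D t x) + term D a t x.

Section Majorization.
Variable R : realType.

Lemma big_dsort n (p : 'I_n -> R) (F : R -> R) :
  \sum_(u <- dsort p) F u = \sum_(i < n) F (p i).
Proof.
rewrite /dsort (perm_big [seq p i | i <- enum 'I_n]) ?perm_sort //.
by rewrite big_map big_enum.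
Qed.

Lemma size_dsort n (p : 'I_n -> R) : size (dsort p) = n.
Proof. by rewrite size_sort size_map size_enum_ord. Qed.

Lemma sorted_dsort n (p : 'I_n -> R) : sorted (fun u v : R => v <= u) (dsort p).
Proof. by apply: sort_sorted => u v; apply: le_total. Qed.

Lemma sum_hinge_sorted (c : R) s : sorted (fun u v : R => v <= u) s ->
  exists2 k, (k <= size s)%N &
    \sum_(u <- s) hinge c u = \sum_(0 <= i < k) (s`_i - c).
Proof.
elim: s => [|u s IH] /= sorted_us; first by exists 0%N; rewrite ?big_nil ?big_geq.
case: (ltP c u) => cu; last first.
  have /allP le_u := order_path_min (fun y x z (h1 : y <= x) h2 => le_trans h2 h1) sorted_us.
  exists 0%N; rewrite // big_geq // big1_seq // => v /andP[_].
  rewrite inE /hinge => /predU1P[-> | /le_u vu]; apply/max_r; rewrite subr_le0 //.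
  exact: le_trans cu.
have [k ks sum_s] := IH (path_sorted sorted_us).
exists k.+1; rewrite // big_cons sum_s big_nat_recl //= /hinge max_l //.
by rewrite subr_ge0 ltW.
Qed.

Lemma sum_hinge_majorized n (p q : 'I_n -> R) c : majorized p q ->
  \sum_(i < n) hinge c (p i) <= \sum_(i < n) hinge c (q i).
Proof.
move=> [prefix_le sum_eq]; rewrite -!big_dsort.
have [k kn ->] := sum_hinge_sorted c (sorted_dsort p); rewrite size_dsort in kn.
have prefix_le' : \sum_(0 <= i < k) (dsort p)`_i <= \sum_(0 <= i < k) (dsort q)`_i.
  have [-> | k0] := posnP k; first by rewrite !big_geq.
  have [-> | kn'] := eqVneq k n; last first.
    have kn_lt : (k < n)%N by rewrite ltn_neqAle kn' kn.
    by apply: prefix_le; rewrite k0 /= -ltnS (ltn_predK kn_lt).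
  have full (u : 'I_n -> R) : \sum_(0 <= i < n) (dsort u)`_i = \sum_(i < n) u i.
    by rewrite -(big_dsort u id) [RHS](big_nth 0) size_dsort.
  by rewrite !full sum_eq.
have shifted_le : \sum_(0 <= i < k) ((dsort p)`_i - c) <= \sum_(0 <= i < k) ((dsort q)`_i - c).
  by rewrite !sumrB lerD2r.
apply: le_trans shifted_le _.
rewrite [X in _ <= X](big_nth 0) size_dsort (big_cat_nat (leq0n k) kn) /= -[X in X <= _]addr0.
apply: lerD; first by apply: ler_sum => i _; rewrite le_max lexx.
by apply: sumr_ge0 => i _; rewrite le_max lexx orbT.
Qed.

Lemma majorized_spread (c h : R) :
  majorized (fun _ : 'I_2 => c) (fun i : 'I_2 => if val i == 0%N then c - h else c + h).
Proof.
split; last by rewrite !big_ord_recl !big_ord0 /=; lra.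
move=> k /andP[k1 k2]; have -> : k = 1%N by apply/eqP; rewrite eqn_leq k1 k2.
rewrite !big_nat1.
have -> : (dsort (fun _ : 'I_2 => c))`_0 = c.
  have : (dsort (fun _ : 'I_2 => c))`_0 \in dsort (fun _ : 'I_2 => c).
    by rewrite mem_nth // size_dsort.
  by rewrite /dsort mem_sort => /mapP[i _ ->].
set q := fun i : 'I_2 => _.
have := big_dsort q id; have := size_dsort q; have := sorted_dsort q.
case: (dsort q) => [|y0 [|y1 [|? ?]]] //= /andP[y10 _] _.
rewrite !big_ord_recl !big_ord0 big_cons big_seq1 /q /=; lra.
Qed.

End Majorization.

Section Interpolant.
Variable R : realType.
Variable D : idxset.
Variables a t : nat -> R.
Hypothesis hD : nonempty_dom D.
Hypothesis ht : increasing D t.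

Lemma interp_chord x : interp D a t x = chord a t (floor_t D t x) x.
Proof. by rewrite /interp /term /chord /frac_t; case: eqP => [->|]; rewrite ?mul0r. Qed.

Lemma chord_next j : in_dom D j.+1 -> a j.+1 = chord a t j (t j.+1).
Proof.
move=> dj; have tj : t j < t j.+1 by apply: ht => //; apply: in_dom_le dj.
by rewrite /chord /slope mulrC divfK ?subr_eq0 ?gt_eqF // addrC subrK.
Qed.

Lemma chord_succ j x : in_dom D j.+1 ->
  chord a t j.+1 x = chord a t j x + (slope a t j.+1 - slope a t j) * (x - t j.+1).
Proof. by move=> dj; rewrite {1}/chord chord_next // /chord; ring. Qed.

Lemma chord_telescope m x : in_dom D m ->
  chord a t m x =
  chord a t 0 x + \sum_(0 <= k < m) (slope a t k.+1 - slope a t k) * (x - t k.+1).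
Proof.
elim: m => [|m IH] dm; first by rewrite big_geq ?addr0.
by rewrite chord_succ // IH ?big_nat_recr ?addrA //; apply: in_dom_le dm.
Qed.

Lemma sum_hinge_floor M x : in_dom D M -> in_It D t x -> x <= t M ->
  \sum_(0 <= k < M) (slope a t k.+1 - slope a t k) * hinge (t k.+1) x =
  \sum_(0 <= k < floor_t D t x) (slope a t k.+1 - slope a t k) * (x - t k.+1).
Proof.
move=> dM hx xM; have [dj tj maxj] := floor_tP hD ht hx; set j := floor_t D t x in dj tj maxj *.
have jM : (j <= M)%N.
  by rewrite leqNgt; apply/negP => Mj; have := le_lt_trans xM (ht dM dj Mj); rewrite ltNge tj.
rewrite (big_cat_nat (leq0n j) jM) /= [X in _ + X]big_nat_cond [X in _ + X]big1 ?addr0.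
  apply: eq_big_nat => k /andP[_ kj]; rewrite /hinge max_l // subr_ge0.
  exact: le_trans (increasing_le ht dj kj) tj.
move=> k /andP[/andP[jk kM] _]; rewrite /hinge max_r ?mulr0 // subr_le0 leNgt.
by apply/negP => /ltW /(maxj _ (in_dom_le kM dM)); rewrite leqNgt ltnS jk.
Qed.

(* The kink at t_M is omitted: it is invisible below t_M, and for a finite
   sequence [slope a t M] would involve a value of [a] outside its index set. *)
Lemma interp_hinge_expansion M x : in_dom D M -> in_It D t x -> x <= t M ->
  interp D a t x =
  chord a t 0 x + \sum_(0 <= k < M.-1) (slope a t k.+1 - slope a t k) * hinge (t k.+1) x.
Proof.
move=> dM hx xM; have [dfl _ _] := floor_tP hD ht hx.
rewrite interp_chord chord_telescope // -(sum_hinge_floor dM hx xM).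
case: M dM xM => [|M] dM xM //=.
by rewrite big_nat_recr //= /hinge max_r ?mulr0 ?addr0 // subr_le0.
Qed.

Lemma sum_interp_expansion n (x : 'I_n -> R) M : in_dom D M ->
  (forall i, in_It D t (x i)) -> (forall i, x i <= t M) ->
  \sum_(i < n) interp D a t (x i) =
  \sum_(i < n) chord a t 0 (x i) +
  \sum_(0 <= k < M.-1) (slope a t k.+1 - slope a t k) * \sum_(i < n) hinge (t k.+1) (x i).
Proof.
move=> dM hx xM; rewrite (eq_bigr _ (fun i _ => interp_hinge_expansion dM (hx i) (xM i))).
by rewrite big_split /= exchange_big; congr (_ + _); apply: eq_bigr => k _; rewrite mulr_sumr.
Qed.

Lemma sum_chord_eq j n (p q : 'I_n -> R) :
  \sum_(i < n) p i = \sum_(i < n) q i ->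
  \sum_(i < n) chord a t j (p i) = \sum_(i < n) chord a t j (q i).
Proof. by move=> sum_pq; rewrite /chord !big_split -!mulr_suml !sumrB sum_pq. Qed.

Lemma sum_interp_majorized : in_Ta D a t ->
  forall n (p q : 'I_n -> R),
    (forall i, in_It D t (p i)) -> (forall i, in_It D t (q i)) -> majorized p q ->
    \sum_(i < n) interp D a t (p i) <= \sum_(i < n) interp D a t (q i).
Proof.
move=> [_ slope_le] n p q hp hq pq.
have [Mp dMp pM] := in_It_family_bound hD ht hp.
have [Mq dMq qM] := in_It_family_bound hD ht hq.
have dM := in_dom_maxn dMp dMq.
have le_tM N (x : R) : (N <= maxn Mp Mq)%N -> x <= t N -> x <= t (maxn Mp Mq).
  by move=> NM xN; apply: le_trans xN (increasing_le ht dM NM).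
rewrite (sum_interp_expansion dM hp (fun i => le_tM _ _ (leq_maxl _ _) (pM i))).
rewrite (sum_interp_expansion dM hq (fun i => le_tM _ _ (leq_maxr _ _) (qM i))).
rewrite (sum_chord_eq _ pq.2) lerD2l; apply: ler_sum_nat => k /andP[_ kM].
apply: ler_wpM2l; last exact: sum_hinge_majorized.
by rewrite subr_ge0; apply: slope_le => //; apply: in_dom_le dM; rewrite -ltn_predRL.
Qed.

Lemma slope_le_succ k :
  (forall p q : 'I_2 -> R,
    (forall i, in_It D t (p i)) -> (forall i, in_It D t (q i)) -> majorized p q ->
    \sum_(i < 2) interp D a t (p i) <= \sum_(i < 2) interp D a t (q i)) ->
  in_dom D k.+2 -> slope a t k <= slope a t k.+1.
Proof.
move=> karamata2 dk2; have dk1 := in_dom_le (leqnSn _) dk2; have dk := in_dom_le (leqnSn _) dk1.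
set c := t k.+1; have tkc : t k < c by apply: ht.
have ctk2 : c < t k.+2 by apply: ht.
set m := Num.min (c - t k) (t k.+2 - c).
have m0 : 0 < m by rewrite lt_min !subr_gt0 tkc ctk2.
have mk : m <= c - t k by rewrite ge_min lexx.
have mk2 : m <= t k.+2 - c by rewrite ge_min lexx orbT.
pose h := m / 2.
have h0 : 0 < h by rewrite divr_gt0.
have hm : h < m by rewrite ltr_pdivrMr // mulr_natr mulr2n ltrDr.
have t0k := increasing_le ht dk (leq0n k).
have in_It_near y : t k <= y -> y < t k.+2 -> in_It D t y.
  by move=> tky ytk2; exact: (in_It_lt ht (le_trans t0k tky) dk2 ytk2).
have hp (i : 'I_2) : in_It D t c by apply: in_It_near; rewrite ?ltW.
pose q (i : 'I_2) := if val i == 0%N then c - h else c + h.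
have hq i : in_It D t (q i) by rewrite /q; case: ifP => _; apply: in_It_near; lra.
have fl_c : floor_t D t c = k.+1 := floor_t_between hD ht (hp ord0) dk2 (lexx c) ctk2.
have fl_minus : floor_t D t (c - h) = k.
  by apply: (floor_t_between hD ht (hq ord0) dk1); rewrite /q /= -/c; lra.
have fl_plus : floor_t D t (c + h) = k.+1.
  by apply: (floor_t_between hD ht (hq ord_max) dk2); rewrite /q /= -/c; lra.
have := karamata2 _ _ hp hq (majorized_spread c h).
rewrite !big_ord_recl !big_ord0 /= !addr0 !interp_chord /q /= fl_c fl_minus fl_plus.
have -> : chord a t k (c - h) = chord a t k.+1 (c - h) + h * (slope a t k.+1 - slope a t k).
  by rewrite chord_succ // -/c; ring.
have affine : chord a t k.+1 (c - h) + chord a t k.+1 (c + h) = chord a t k.+1 c + chord a t k.+1 c.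
  by rewrite /chord; ring.
move=> ineq; have : 0 <= h * (slope a t k.+1 - slope a t k) by lra.
by rewrite pmulr_rge0 // subr_ge0.
Qed.

Lemma in_Ta_of_slope_le_succ :
  (forall k, in_dom D k.+2 -> slope a t k <= slope a t k.+1) -> in_Ta D a t.
Proof.
move=> slope_succ; split=> // i j; elim: j => [|j IH] ij dj.
  by move: ij; rewrite leqn0 => /eqP->.
move: ij; rewrite leq_eqVlt => /orP[/eqP-> // | /IH le_ij].
exact: le_trans (le_ij (in_dom_le (leqnSn _) dj)) (slope_succ _ dj).
Qed.

End Interpolant.

Lemma majorization_ineqE (R : realType) (D : idxset) (a t : nat -> R) n (p q : 'I_n -> R) :
  (\sum_(i < n) (a (floor_t D t (p i)) - a (floor_t D t (q i)))
     <= \sum_(i < n) (term D a t (q i) - term D a t (p i))) =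
  (\sum_(i < n) interp D a t (p i) <= \sum_(i < n) interp D a t (q i)).
Proof. by rewrite /interp !sumrB !big_split /=; apply/idP/idP => ?; lra. Qed.

Theorem theorem4p8 (R : realType) (D : idxset)
  (hD : nonempty_dom D)
  (a t : nat -> R) (ht : increasing D t) :
  in_Ta D a t <->
  (forall (n : nat), (2 <= n)%N ->
   forall p q : 'I_n -> R,
     (forall i, in_It D t (p i)) -> (forall i, in_It D t (q i)) ->
     majorized p q ->
     \sum_(i < n) (a (floor_t D t (p i)) - a (floor_t D t (q i)))
       <= \sum_(i < n) (term D a t (q i) - term D a t (p i))).
Proof.
split=> [Ta n _ p q hp hq pq | karamata].
  by rewrite majorization_ineqE; apply: sum_interp_majorized.
apply: (in_Ta_of_slope_le_succ ht) => k; apply: (slope_le_succ hD ht) => p q hp hq pq.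
by rewrite -majorization_ineqE; apply: karamata.
Qed.
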